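(* Under the standing assumptions, suppose that $V_R(V_R(R^{\beta_H}))=R^{\beta_H}$ for every wide subgroupoid $H$ of $\mathcal G$. Consider, on the set of wide subgroupoids of $\mathcal G$, the Galois map $\theta(H)=R^{\beta_H}$ and the map $\gamma(H)=\bigoplus_{h\in H}J_h$. Then $\theta$ is injective if and only if $\gamma$ is injective.
   Context: All rings and algebras are associative and unital. A groupoid is a nonempty set $\mathcal G$ with a partially defined associative multiplication in which every $g$ has an inverse $g^{-1}$, a left identity $r(g)=gg^{-1}$ and a right identity $d(g)=g^{-1}g$; $gh$ is defined iff $d(g)=r(h)$; $\mathcal G_0$ is the set of identities. A subgroupoid is a nonempty subset closed under inverses and defined products; it is wide if it contains $\mathcal G_0$. Standing assumptions: $K$ commutative ring, $R$ a $K$-algebra, $\mathcal G$ a finite groupoid, $\beta=(\{E_g\},\{\beta_g\})$ a unital action of $\mathcal G$ on $R$: $E_g=E_{r(g)}$ is an ideal of $R$, unital with identity $1_g$ (so $1_{g^{-1}}=1_{d(g)}$), $\beta_g:E_{g^{-1}}\to E_g$ a $K$-algebra isomorphism, $\beta_e=\mathrm{id}_{E_e}$ for $e\in\mathcal G_0$, $\beta_g\beta_h(x)=\beta_{gh}(x)$ whenever $d(g)=r(h)$, $x\in E_{h^{-1}}$; $R=\bigoplus_{e\in\mathcal G_0}E_e$; and $R$ is a $\beta$-Galois extension of $R^\beta$: there exist $x_i,y_i\in R$ ($1\le i\le m$) with $\sum_i x_i\beta_g(y_i1_{g^{-1}})=1_g$ if $g\in\mathcal G_0$ and $=0$ otherwise.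 For a subgroupoid $H$, $R^{\beta_H}=\{r\in R:\beta_h(r1_{h^{-1}})=r1_h\ \forall h\in H\}$. $V_R(S)=\{r\in R: rs=sr\ \forall s\in S\}$. For $g\in\mathcal G$, $J_g=\{r\in E_g: r\beta_g(x1_{g^{-1}})=xr\ \forall x\in R\}$. *)

From mathcomp Require Import all_boot all_order all_algebra.
Set Implicit Arguments. Unset Strict Implicit. Unset Printing Implicit Defensive.
Import GRing.Theory.
Local Open Scope ring_scope.

(* A finite groupoid on the carrier T: a multiplication [gmul] (only meaningful
   on composable pairs, i.e. when d g = r h) and an inverse [ginv];
   r g = g g^-1 and d g = g^-1 g. *)
Record groupoid (T : finType) := Groupoid {
  gmul : T -> T -> T;
  ginv : T -> T
}.

Section GroupoidOps.
Variables (T : finType) (G : groupoid T).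
Definition gr (g : T) : T := gmul G g (ginv G g).
Definition gd (g : T) : T := gmul G (ginv G g) g.
Definition gid : {set T} := [set e | gr e == e].
End GroupoidOps.

Definition is_groupoid (T : finType) (G : groupoid T) : Prop :=
  [/\ (forall g h k, gd G g = gr G h -> gd G h = gr G k ->
          gmul G (gmul G g h) k = gmul G g (gmul G h k)),
      (forall g h, gd G g = gr G h ->
          gr G (gmul G g h) = gr G g /\ gd G (gmul G g h) = gd G h),
      (forall g, gmul G (gr G g) g = g /\ gmul G g (gd G g) = g),
      (forall g, gr G (ginv G g) = gd G g /\ gd G (ginv G g) = gr G g)
    & ((forall g, gr G g \in gid G /\ gd G g \in gid G)
       /\ (forall g, ginv G (ginv G g) = g))].

Definition subgroupoid (T : finType) (G : groupoid T) (H : {set T}) : Prop :=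
  [/\ H != set0,
      (forall h, h \in H -> ginv G h \in H)
    & (forall g h, g \in H -> h \in H -> gd G g = gr G h -> gmul G g h \in H)].

Definition wide (T : finType) (G : groupoid T) (H : {set T}) : Prop :=
  subgroupoid G H /\ gid G \subset H.

(* Data: E g (the ideal E_g, as a predicate on R), one g (its identity 1_g),
   beta g (the isomorphism beta_g : E_{g^-1} -> E_g, as a function on R). *)

Definition is_ideal (R : pzRingType) (I : R -> Prop) : Prop :=
  [/\ I 0, (forall x y, I x -> I y -> I (x + y)), (forall x, I x -> I (- x))
    & (forall a x, I x -> I (a * x) /\ I (x * a))].

Definition is_unital_action (K : comPzRingType) (R : algType K)
  (T : finType) (G : groupoid T) (E : T -> (R -> Prop)) (one : T -> R)
  (beta : T -> R -> R) : Prop :=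
   (forall g x, E g x <-> E (gr G g) x) /\
   (forall g, is_ideal (E g)) /\
   (forall g, E g (one g) /\ (forall x, E g x -> one g * x = x /\ x * one g = x)) /\
   (forall g,
      (forall x, E (ginv G g) x -> E g (beta g x)) /\
          (forall x y, E (ginv G g) x -> E (ginv G g) y -> beta g x = beta g y -> x = y) /\
          (forall y, E g y -> exists2 x, E (ginv G g) x & beta g x = y) /\
          (forall x y, E (ginv G g) x -> E (ginv G g) y -> beta g (x + y) = beta g x + beta g y) /\
          (forall x y, E (ginv G g) x -> E (ginv G g) y -> beta g (x * y) = beta g x * beta g y)
        /\ (forall (k : K) x, E (ginv G g) x -> beta g (k *: x) = k *: beta g x)) /\
   (forall e, e \in gid G -> forall x, E e x -> beta e x = x) /\
   (forall g h, gd G g = gr G h -> forall x, E (ginv G h) x ->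
       beta g (beta h x) = beta (gmul G g h) x) /\
   ((forall x : R, exists f : T -> R,
        (forall e, e \in gid G -> E e (f e)) /\ x = \sum_(e in gid G) f e) /\
    (forall f : T -> R, (forall e, e \in gid G -> E e (f e)) ->
        \sum_(e in gid G) f e = 0 -> forall e, e \in gid G -> f e = 0)).

Definition is_galois (K : comPzRingType) (R : algType K)
  (T : finType) (G : groupoid T) (one : T -> R) (beta : T -> R -> R) : Prop :=
  exists m : nat, exists x y : 'I_m -> R, forall g : T,
    \sum_(i < m) x i * beta g (y i * one (ginv G g)) =
      (if g \in gid G then one g else 0).

Definition fixed_ring (K : comPzRingType) (R : algType K)
  (T : finType) (G : groupoid T) (one : T -> R) (beta : T -> R -> R)
  (H : {set T}) : (R -> Prop) :=
  fun r => forall h, h \in H -> beta h (r * one (ginv G h)) = r * one h.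

Definition centralizer (R : pzRingType) (S : (R -> Prop)) : (R -> Prop) :=
  fun r => forall s, S s -> r * s = s * r.

Definition Jset (K : comPzRingType) (R : algType K)
  (T : finType) (G : groupoid T) (E : T -> (R -> Prop)) (one : T -> R)
  (beta : T -> R -> R) (g : T) : (R -> Prop) :=
  fun r => E g r /\ forall x, r * beta g (x * one (ginv G g)) = x * r.

(* gamma(H) = (+)_{h in H} J_h, the (internal) sum of the J_h in R *)
Definition gamma_map (K : comPzRingType) (R : algType K)
  (T : finType) (G : groupoid T) (E : T -> (R -> Prop)) (one : T -> R)
  (beta : T -> R -> R) (H : {set T}) : (R -> Prop) :=
  fun r => exists a : T -> R,
     (forall h, h \in H -> Jset G E one beta h (a h)) /\ r = \sum_(h in H) a h.

Definition injective_on_wide (T : finType) (G : groupoid T) (R : Type)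
  (F : {set T} -> R -> Prop) : Prop :=
  forall H1 H2, wide G H1 -> wide G H2 -> (forall x, F H1 x <-> F H2 x) -> H1 = H2.

From mathcomp Require Import all_boot all_order all_algebra.
Set Implicit Arguments. Unset Strict Implicit. Unset Printing Implicit Defensive.
Import GRing.Theory.
Local Open Scope ring_scope.

(* The heart of the proof is the identity gamma(H) = V_R(R^{beta_H}) for every
   wide subgroupoid H.  Given Galois coordinates x_i, y_i, the trace
   tr_H(z) = sum_{h in H} beta_h(z 1_{h^-1}) takes values in R^{beta_H} and
   satisfies sum_i x_i tr_H(y_i u) = u = sum_j tr_H(u x_j) y_j.  An element of
   J_h commutes with R^{beta_H}, hence so does every element of gamma(H);
   conversely, if r centralizes R^{beta_H}, its components
   a_h = sum_i x_i r beta_h(y_i 1_{h^-1}) lie in J_h and add up to r.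
   Combined with the double centralizer hypothesis this gives gamma = V o theta
   and theta = V o gamma on wide subgroupoids, and any two maps determined by
   each other in this way are injective simultaneously. *)

Lemma centralizer_ext (R : pzRingType) (S1 S2 : R -> Prop) :
  (forall s, S1 s <-> S2 s) -> forall r, centralizer S1 r <-> centralizer S2 r.
Proof. by move=> S12 r; split=> hr s /S12; apply: hr. Qed.

Lemma injective_on_wide_centralizer_dual (T : finType) (G : groupoid T)
    (R : pzRingType) (F C : {set T} -> R -> Prop) :
  (forall H, wide G H -> forall r, C H r <-> centralizer (F H) r) ->
  (forall H, wide G H -> forall r, F H r <-> centralizer (C H) r) ->
  injective_on_wide G F <-> injective_on_wide G C.
Proof.
move=> CE FE; split=> inj H1 H2 w1 w2 eq12; apply: inj => // r.
- apply: iff_trans (FE _ w1 r) (iff_trans _ (iff_sym (FE _ w2 r))).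
  exact: centralizer_ext.
- apply: iff_trans (CE _ w1 r) (iff_trans _ (iff_sym (CE _ w2 r))).
  exact: centralizer_ext.
Qed.

Section Groupoid.
Variables (T : finType) (G : groupoid T).
Hypothesis HG : is_groupoid G.

Lemma ginvK g : ginv G (ginv G g) = g. Proof. by case: HG => _ _ _ _ [_ ->]. Qed.
Lemma gr_gid g : gr G g \in gid G. Proof. by case: HG => _ _ _ _ [/(_ g) []]. Qed.
Lemma gd_gid g : gd G g \in gid G. Proof. by case: HG => _ _ _ _ [/(_ g) []]. Qed.
Lemma gr_inv g : gr G (ginv G g) = gd G g. Proof. by case: HG => _ _ _ /(_ g) []. Qed.
Lemma gd_inv g : gd G (ginv G g) = gr G g. Proof. by case: HG => _ _ _ /(_ g) []. Qed.

Lemma gmulA g h k : gd G g = gr G h -> gd G h = gr G k ->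
  gmul G (gmul G g h) k = gmul G g (gmul G h k).
Proof. by case: HG => + _ _ _ _; apply. Qed.

Lemma gmul_r g h : gd G g = gr G h -> gr G (gmul G g h) = gr G g.
Proof. by case: HG => _ + _ _ _ => /(_ g h) gh /gh []. Qed.

Lemma gmul_d g h : gd G g = gr G h -> gd G (gmul G g h) = gd G h.
Proof. by case: HG => _ + _ _ _ => /(_ g h) gh /gh []. Qed.

Lemma gmul_rl g : gmul G (gr G g) g = g. Proof. by case: HG => _ _ /(_ g) []. Qed.
Lemma gmul_dr g : gmul G g (gd G g) = g. Proof. by case: HG => _ _ /(_ g) []. Qed.

(* Identities are their own inverses: from e = e e^-1 one gets
   e^-1 = d(e) and d(e) = d(d(e)) = e. *)
Lemma gid_inv e : e \in gid G -> ginv G e = e.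
Proof.
rewrite inE => /eqP re.
have inv_d : ginv G e = gd G e.
  rewrite -{1}(gmul_rl (ginv G e)) gr_inv {1}/gd gmulA ?gd_inv ?gr_inv //.
  by rewrite -/(gr G e) re.
have d_d : gd G e = gd G (gd G e).
  have dr : gd G e = gr G (gd G e) by have := gd_gid e; rewrite inE => /eqP ->.
  by have := gmul_d dr; rewrite gmul_dr.
by rewrite inv_d d_d -inv_d gd_inv.
Qed.

Lemma gid_ginv h : (ginv G h \in gid G) = (h \in gid G).
Proof.
apply/idP/idP => hh; last by rewrite gid_inv.
by have := gid_inv hh; rewrite ginvK => ->.
Qed.

Section UnitalAction.
Variables (K : comPzRingType) (R : algType K)
  (E : T -> R -> Prop) (one : T -> R) (beta : T -> R -> R).
Hypothesis Hact : is_unital_action G E one beta.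

Lemma E_r g z : E g z <-> E (gr G g) z.
Proof. by case: Hact => + _; apply. Qed.
Lemma E_ideal g : is_ideal (E g).
Proof. by case: Hact => _ [+ _]; apply. Qed.
Lemma E_one g : E g (one g).
Proof. by case: Hact => _ [_ [/(_ g) [] + _]]. Qed.
Lemma one_l g z : E g z -> one g * z = z.
Proof. by case: Hact => _ [_ [/(_ g) [] _ unit _]] /unit []. Qed.
Lemma one_r g z : E g z -> z * one g = z.
Proof. by case: Hact => _ [_ [/(_ g) [] _ unit _]] /unit []. Qed.
Lemma E0 g : E g 0. Proof. by case: (E_ideal g). Qed.
Lemma E_add g z t : E g z -> E g t -> E g (z + t).
Proof. by case: (E_ideal g) => _ add _ _; apply: add. Qed.
Lemma E_mulr g a z : E g z -> E g (z * a).
Proof. by case: (E_ideal g) => _ _ _ mul /(mul a) []. Qed.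
Lemma E_mull g a z : E g z -> E g (a * z).
Proof. by case: (E_ideal g) => _ _ _ mul /(mul a) []. Qed.
Lemma E_sum g (I : Type) (r : seq I) (P : pred I) (F : I -> R) :
  (forall i, P i -> E g (F i)) -> E g (\sum_(i <- r | P i) F i).
Proof. by move=> EF; apply: (big_ind (E g)); [exact: E0 | exact: E_add |]. Qed.
Lemma E_inv_one g z : E (ginv G g) (z * one (ginv G g)).
Proof. exact/E_mull/E_one. Qed.

Lemma one_central g a : one g * a = a * one g.
Proof.
have l : one g * (a * one g) = a * one g by rewrite one_l //; exact/E_mull/E_one.
have r : (one g * a) * one g = one g * a by rewrite one_r //; exact/E_mulr/E_one.
by rewrite -r -mulrA l.
Qed.
Lemma one_idem g : one g * one g = one g. Proof. by rewrite one_l //; exact: E_one. Qed.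

Lemma one_gr g : one (gr G g) = one g.
Proof.
have E1 : E g (one (gr G g)) by apply/(E_r g); exact: E_one.
have E2 : E (gr G g) (one g) by apply/(E_r g); exact: E_one.
by rewrite -(one_r E1) (one_l E2).
Qed.
Lemma one_inv g : one (ginv G g) = one (gd G g).
Proof. by rewrite -one_gr gr_inv. Qed.

Lemma beta_E g z : E (ginv G g) z -> E g (beta g z).
Proof. by case: Hact => _ [_ [_ [/(_ g) [+ _] _]]]; apply. Qed.
Lemma beta_add g z t : E (ginv G g) z -> E (ginv G g) t ->
  beta g (z + t) = beta g z + beta g t.
Proof. by case: Hact => _ [_ [_ [/(_ g) [_ [_ [_ [+ _]]]] _]]]; apply. Qed.
Lemma beta_mul g z t : E (ginv G g) z -> E (ginv G g) t ->
  beta g (z * t) = beta g z * beta g t.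
Proof. by case: Hact => _ [_ [_ [/(_ g) [_ [_ [_ [_ [+ _]]]]] _]]]; apply. Qed.
Lemma beta_id e z : e \in gid G -> E e z -> beta e z = z.
Proof. by move=> he Ez; case: Hact => _ [_ [_ [_ [id _]]]]; exact: id. Qed.
Lemma beta_comp g h z : gd G g = gr G h -> E (ginv G h) z ->
  beta g (beta h z) = beta (gmul G g h) z.
Proof. by move=> gh Ez; case: Hact => _ [_ [_ [_ [_ [comp _]]]]]; exact: comp. Qed.

Lemma beta0 g : beta g 0 = 0.
Proof.
have := beta_add (E0 (ginv G g)) (E0 (ginv G g)); rewrite addr0.
by move/(congr1 (fun z => z - beta g 0)); rewrite /= subrr addrK.
Qed.

Lemma beta_sum g (I : Type) (r : seq I) (P : pred I) (F : I -> R) :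
  (forall i, P i -> E (ginv G g) (F i)) ->
  beta g (\sum_(i <- r | P i) F i) = \sum_(i <- r | P i) beta g (F i).
Proof.
move=> EF; pose Q a b := E (ginv G g) a /\ beta g a = b.
suff [] : Q (\sum_(i <- r | P i) F i) (\sum_(i <- r | P i) beta g (F i)) by [].
apply: (big_rec2 Q); first by split; [exact: E0 | exact: beta0].
move=> i a b Pi [Ea <-]; split; first exact: E_add (EF i Pi) Ea.
by apply: beta_add => //; exact: EF.
Qed.

(* beta_h, extended by z |-> beta_h(z 1_{h^-1}) to all of R, is multiplicative. *)
Lemma beta_one_mul h a b :
  beta h (a * one (ginv G h)) * beta h (b * one (ginv G h)) =
  beta h (a * b * one (ginv G h)).
Proof.
rewrite -beta_mul; try exact: E_inv_one; congr (beta h _).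
by rewrite mulrA -(mulrA a) one_central mulrA -mulrA one_idem.
Qed.

Lemma E_gid_disjoint a b z : a \in gid G -> b \in gid G -> a != b ->
  E a z -> E b z -> z = 0.
Proof.
move=> ha hb ab Eaz Ebz; case: Hact => _ [_ [_ [_ [_ [_ [_ indep]]]]]].
pose f t := if t == a then z else if t == b then - z else 0.
have Ef : forall e, e \in gid G -> E e (f e).
  move=> e _; rewrite /f; case: eqP => [->//|_]; case: eqP => [->|_]; last exact: E0.
  by case: (E_ideal b) => _ _ opp _; apply: opp.
have := indep f Ef; rewrite (bigD1 a) //= (bigD1 b) /=; last by rewrite hb eq_sym.
rewrite big1; last by move=> e /andP [/andP [_ /negPf ea] /negPf eb]; rewrite /f ea eb.
rewrite /f eqxx; rewrite eq_sym in ab; rewrite (negPf ab) eqxx addr0 subrr.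
by move/(_ erefl a ha); rewrite eqxx.
Qed.

Lemma mul_one_gid a b z : a \in gid G -> b \in gid G -> E a z ->
  z * one b = if a == b then z else 0.
Proof.
move=> ha hb Ez; case: eqP => [<-|/eqP ne]; first exact: one_r.
by apply: (E_gid_disjoint ha hb ne); [exact: E_mulr | exact/E_mull/E_one].
Qed.

Lemma sum_one : \sum_(e in gid G) one e = 1.
Proof.
case: Hact => _ [_ [_ [_ [_ [_ [decomp _]]]]]].
have [f [Ef f1]] := decomp 1.
have fE : forall e, e \in gid G -> f e = one e.
  move=> e he; rewrite -[RHS]mulr1 f1 mulr_sumr (bigD1 e) //= big1 ?addr0.
    by rewrite one_central one_r //; exact: Ef.
  move=> e' /andP [he' ne]; rewrite one_central (mul_one_gid he' he (Ef e' he')).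
  by rewrite (negPf ne).
by rewrite f1; apply: eq_bigr => e he; rewrite fE.
Qed.

Lemma J_centralizes_fixed (H : {set T}) h a s : h \in H ->
  Jset G E one beta h a -> fixed_ring G one beta H s -> a * s = s * a.
Proof.
move=> hH [Ea Ja] fix_s; rewrite -(Ja s) (fix_s h hH).
by rewrite -one_central mulrA one_r.
Qed.

Lemma gamma_centralizes (H : {set T}) r :
  gamma_map G E one beta H r -> centralizer (fixed_ring G one beta H) r.
Proof.
move=> [a [Ja ->]] s fix_s; rewrite mulr_suml mulr_sumr.
by apply: eq_bigr => h hH; exact: J_centralizes_fixed (Ja h hH) fix_s.
Qed.

Section GaloisCoordinates.
Variables (m : nat) (x y : 'I_m -> R).
Hypothesis Hxy : forall g : T,
  \sum_(i < m) x i * beta g (y i * one (ginv G g)) =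
    (if g \in gid G then one g else 0).

(* The Galois coordinates also satisfy the transposed identity
   sum_j beta_h(x_j 1_{h^-1}) y_j = [h in G_0] 1_h, obtained by applying
   beta_h to the defining identity at h^-1. *)
Lemma galois_coord_dual h : \sum_(j < m) beta h (x j * one (ginv G h)) * y j =
  if h \in gid G then one h else 0.
Proof.
have coord := Hxy (ginv G h); rewrite ginvK gid_ginv in coord.
have Ey : forall i, E (ginv G h) (beta (ginv G h) (y i * one h)).
  by move=> i; apply: beta_E; rewrite ginvK; exact/E_mull/E_one.
have := congr1 (beta h) coord; rewrite beta_sum => [bcoord|i _]; last exact: E_mull.
transitivity (beta h (if h \in gid G then one (ginv G h) else 0)); last first.
  case: ifP => hg; last exact: beta0.
  by rewrite gid_inv // beta_id //; exact: E_one.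
rewrite -bcoord; apply: eq_bigr => i _.
rewrite -{1}(one_l (Ey i)) [in RHS]mulrA [RHS]beta_mul //; last exact: E_inv_one.
rewrite beta_comp ?gr_inv //; last by rewrite ginvK; exact/E_mull/E_one.
rewrite -/(gr G h) (beta_id (gr_gid h)); last by apply/(E_r h); exact/E_mull/E_one.
by rewrite mulrA [RHS]one_r //; exact/E_mulr/beta_E/E_inv_one.
Qed.

Variable H : {set T}.
Hypothesis HH : wide G H.

Lemma H_inv h : h \in H -> ginv G h \in H. Proof. by case: HH => [[_ + _] _]; apply. Qed.
Lemma H_mul g h : g \in H -> h \in H -> gd G g = gr G h -> gmul G g h \in H.
Proof. by move=> gH hH gh; case: HH => [[_ _ +] _]; apply. Qed.

Definition trace z := \sum_(h in H) beta h (z * one (ginv G h)).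

Lemma sum_gid_wide (F : T -> R) :
  \sum_(h in H) (if h \in gid G then F h else 0) = \sum_(h in gid G) F h.
Proof.
rewrite -big_mkcondr; apply: eq_bigl => h /=; apply/andP/idP => [[]//|hg].
by split=> //; case: HH => _ /subsetP; apply.
Qed.

Lemma trace_coord_left u : \sum_(i < m) x i * trace (y i * u) = u.
Proof.
rewrite /trace; under eq_bigr => i _ do rewrite mulr_sumr.
rewrite exchange_big /=.
transitivity (\sum_(h in H)
    (if h \in gid G then one h else 0) * beta h (u * one (ginv G h))).
  apply: eq_bigr => h hH; rewrite -Hxy mulr_suml; apply: eq_bigr => i _.
  by rewrite -[RHS]mulrA beta_one_mul.
transitivity (\sum_(h in H) (if h \in gid G then u * one h else 0)).
  apply: eq_bigr => h _; case: ifP => hg; last by rewrite mul0r.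
  rewrite gid_inv // beta_id //; last exact/E_mull/E_one.
  by rewrite one_central -mulrA one_idem.
by rewrite sum_gid_wide -mulr_sumr sum_one mulr1.
Qed.

Lemma trace_coord_right v : \sum_(j < m) trace (v * x j) * y j = v.
Proof.
rewrite /trace; under eq_bigr => j _ do rewrite mulr_suml.
rewrite exchange_big /=.
transitivity (\sum_(h in H)
    beta h (v * one (ginv G h)) * (if h \in gid G then one h else 0)).
  apply: eq_bigr => h hH; rewrite -galois_coord_dual mulr_sumr.
  by apply: eq_bigr => j _; rewrite [RHS]mulrA beta_one_mul.
transitivity (\sum_(h in H) (if h \in gid G then v * one h else 0)).
  apply: eq_bigr => h _; case: ifP => hg; last by rewrite mulr0.
  rewrite gid_inv // beta_id //; last exact/E_mull/E_one.
  by rewrite -mulrA one_idem.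
by rewrite sum_gid_wide -mulr_sumr sum_one mulr1.
Qed.

Lemma trace_one z t : t \in gid G ->
  trace z * one t = \sum_(h in H | gr G h == t) beta h (z * one (ginv G h)).
Proof.
move=> ht; rewrite /trace mulr_suml big_mkcondr; apply: eq_bigr => h _.
rewrite (mul_one_gid (gr_gid h) ht) //.
by apply/(E_r h); apply: beta_E; exact: E_inv_one.
Qed.

(* tr_H(z) is beta_H-fixed: for k in H, beta_k maps the E_{d(k)}-component of
   tr_H(z) to its E_{r(k)}-component, because h |-> kh is a bijection from
   {h in H | r(h) = d(k)} onto {g in H | r(g) = r(k)}. *)
Lemma trace_fixed z : fixed_ring G one beta H (trace z).
Proof.
move=> k kH.
rewrite one_inv (trace_one _ (gd_gid k)) -one_gr (trace_one _ (gr_gid k)).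
rewrite beta_sum; last first.
  move=> h /andP [_ /eqP hr]; apply/(E_r (ginv G k)); rewrite gr_inv -hr.
  by apply/(E_r h); apply: beta_E; exact: E_inv_one.
transitivity (\sum_(h in H | gr G h == gd G k)
                beta (gmul G k h) (z * one (gd G (gmul G k h)))).
  apply: eq_big => // h /andP [_ /eqP hr].
  rewrite beta_comp //; last exact: E_inv_one.
  by rewrite gmul_d // one_inv.
symmetry; rewrite (reindex_onto (gmul G k) (gmul G (ginv G k))); last first.
  move=> g /andP [_ /eqP gr_k].
  by rewrite -gmulA ?gd_inv ?gr_inv // -/(gr G k) -gr_k gmul_rl.
apply: eq_big => [j|j /andP [/andP [_ /eqP hr] _]]; last by rewrite one_inv.
apply/idP/idP.
  move=> /andP [/andP [kjH /eqP kj_r] /eqP kj].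
  have comp : gd G (ginv G k) = gr G (gmul G k j) by rewrite gd_inv kj_r.
  rewrite -kj; apply/andP; split; first exact: H_mul (H_inv kH) kjH comp.
  by rewrite gmul_r // gr_inv.
move=> /andP [jH /eqP jr].
rewrite H_mul ?gmul_r ?eqxx //= -gmulA ?gd_inv //.
by rewrite -/(gd G k) -jr gmul_rl.
Qed.

(* If r centralizes R^{beta_H}, then a_h = sum_i x_i r beta_h(y_i 1_{h^-1})
   lies in J_h: expanding y_i z = sum_j tr_H(y_i z x_j) y_j, the traces are
   fixed and commute with r, and sum_i x_i tr_H(y_i z x_j) = z x_j. *)
Definition component r h := \sum_(i < m) x i * r * beta h (y i * one (ginv G h)).

Lemma component_J r h : centralizer (fixed_ring G one beta H) r -> h \in H ->
  Jset G E one beta h (component r h).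
Proof.
move=> cent_r hH; split; first by apply: E_sum => i _; exact/E_mull/beta_E/E_inv_one.
move=> z; rewrite /component mulr_suml [RHS]mulr_sumr.
under eq_bigr => i _ do rewrite -mulrA beta_one_mul.
pose F u v := u * r * beta h (v * one (ginv G h)).
have F_expand u (s : 'I_m -> R) : (forall j, fixed_ring G one beta H (s j)) ->
    F u (\sum_(j < m) s j * y j) = \sum_(j < m) F (u * s j) (y j).
  move=> fix_s; rewrite /F mulr_suml beta_sum => [|j _]; last exact: E_inv_one.
  rewrite mulr_sumr; apply: eq_bigr => j _.
  rewrite -mulrA -beta_one_mul (fix_s j h hH) -mulrA (one_l (beta_E (E_inv_one _ _))).
  by rewrite !mulrA -(mulrA u r) cent_r ?mulrA.
transitivity (\sum_(i < m) F (x i) (y i * z)); first by [].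
rewrite (eq_bigr (fun i =>
    \sum_(j < m) F (x i * trace (y i * z * x j)) (y j))); last first.
  move=> i _; rewrite -{1}[y i * z]trace_coord_right F_expand // => j.
  exact: trace_fixed.
rewrite exchange_big /=; apply: eq_bigr => j _.
rewrite /F -!mulr_suml; under eq_bigr => i _ do rewrite -mulrA.
by rewrite trace_coord_left !mulrA.
Qed.

Lemma sum_component r : centralizer (fixed_ring G one beta H) r ->
  \sum_(h in H) component r h = r.
Proof.
move=> cent_r; rewrite exchange_big /=.
under eq_bigr => i _ do rewrite -mulr_sumr -/(trace (y i)).
transitivity (\sum_(i < m) x i * trace (y i * 1) * r); last first.
  by rewrite -mulr_suml trace_coord_left mul1r.
by apply: eq_bigr => i _; rewrite mulr1 -!mulrA cent_r //; exact: trace_fixed.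
Qed.

Lemma gamma_centralizerE r :
  gamma_map G E one beta H r <-> centralizer (fixed_ring G one beta H) r.
Proof.
split; first exact: gamma_centralizes.
move=> cent_r; exists (component r); split; last by rewrite sum_component.
by move=> h; exact: component_J.
Qed.

End GaloisCoordinates.
End UnitalAction.
End Groupoid.

Theorem theorem3p9 (K : comPzRingType) (R : algType K) (T : finType)
  (G : groupoid T) (E : T -> R -> Prop) (one : T -> R) (beta : T -> R -> R)
  (HG : is_groupoid G)
  (Hact : is_unital_action G E one beta)
  (Hgal : is_galois G one beta)
  (Hdc : forall H : {set T}, wide G H ->
     forall x : R, centralizer (centralizer (fixed_ring G one beta H)) x <->
                   fixed_ring G one beta H x) :
  injective_on_wide G (fixed_ring G one beta) <->
  injective_on_wide G (gamma_map G E one beta).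
Proof.
have [m [x [y Hxy]]] := Hgal.
have gammaE H (wH : wide G H) := gamma_centralizerE HG Hact Hxy wH.
apply: injective_on_wide_centralizer_dual => // H wH r.
apply: iff_trans (iff_sym (Hdc H wH r)) _.
by apply: centralizer_ext => s; apply: iff_sym; exact: gammaE.
Qed.
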